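(* Every positive tight program $P$ can be isomorphically represented by a cascade program product of reset programs; that is, there exist $k\ge1$, a finite nonempty set $\mathcal I_{\mathbf P}$ and a feedforward function $\psi_{\mathbf P}$ such that the product $\mathbf P=R\ltimes\dots\ltimes R\,[\mathcal I_{\mathbf P},\psi_{\mathbf P}]$ ($k$ factors, each the reset program $R$) satisfies $\Psi_P\in\mathbf I\mathbf S(\{\Psi_{\mathbf P}\})$.
   Context: Programs: a (normal logic) program $P$ over a finite nonempty set of atoms $\Gamma_P$ is a finite nonempty set of rules $a\leftarrow b_1,\dots,b_k,\mathrm{not}\,b_{k+1},\dots,\mathrm{not}\,b_m$ ($m\ge k\ge 0$, atoms in $\Gamma_P$); for such a rule $r$, $H(r)=a$, $B^+(r)=\{b_1,\dots,b_k\}$, $B^-(r)=\{b_{k+1},\dots,b_m\}$. $P$ is positive if $B^-(r)=\emptyset$ for every $r\in P$. $P$ is tight if there is a map $\ell:\Gamma_P\to\mathbb Z_{\ge0}$ with $\ell(H(r))>\ell(b)$ for every rule $r\in P$ and every $b\in B^+(r)$. $\mathcal I_P$ is the power set of $\Gamma_P$. $\Psi_P:\mathcal I_P\times\mathcal I_P\to\mathcal I_P$ is $\Psi_P(I,J)=\{H(r): r\in P,\ B^+(r)\subseteq I,\ B^-(r)\cap J=\emptyset\}$. The characteristic automaton of $P$ is $\langle \mathcal I_P,\mathcal I_P,\Psi_P\rangle$, also denoted $\Psi_P$. Reset program: $R$ over $\{1\}$ consists of the single rule $1\leftarrow\mathrm{not}\,1$ (so $\Psi_R(I,J)=\{1\}$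 if $J=\emptyset$ and $\emptyset$ otherwise). Automata: an automaton $\langle Q,\Sigma,\delta\rangle$ has finite state set $Q$, finite nonempty input alphabet $\Sigma$, and $\delta:Q\times\Sigma\to Q$. $\langle Q',\Sigma',\delta'\rangle$ is a subautomaton of $\langle Q,\Sigma,\delta\rangle$ if $Q'\subseteq Q$, $\Sigma'\subseteq\Sigma$, $\delta(Q'\times\Sigma')\subseteq Q'$ and $\delta'=\delta|_{Q'\times\Sigma'}$. An isomorphism onto $\langle Q',\Sigma',\delta'\rangle$ is a pair of bijections $h_1:Q\to Q'$, $h_2:\Sigma\to\Sigma'$ with $h_1(\delta(q,x))=\delta'(h_1(q),h_2(x))$ for all $q,x$. $\mathbf S(\mathcal A)$, $\mathbf I(\mathcal A)$ denote the classes of subautomata and isomorphic images of automata in $\mathcal A$. Cascade program product: let $P_1,\dots,P_k$ ($k\ge1$) be programs and $\mathcal I_{\mathbf P}$ a finite nonempty set. A feedforward function is $\psi_{\mathbf P}=(\psi_{\mathbf P,1},\dots,\psi_{\mathbf P,k})$ with $\psi_{\mathbf P,i}:(\mathcal I_{P_1}\times\dots\times\mathcal I_{P_k})\times\mathcal I_{\mathbf P}\to\mathcal I_{P_i}$ not depending on its $j$-th component for any $j\ge i$. The product $\mathbf P=P_1\ltimes\dots\ltimes P_k[\mathcal I_{\mathbf P},\psi_{\mathbf P}]$ has characteristic automaton $\Psi_{\mathbf P}=\langle \mathcal I_{P_1}\times\dots\times\mathcal I_{P_k},\ \mathcal I_{\mathbf P},\ \Psi_{\mathbf P}\rangle$ with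 $\Psi_{\mathbf P}((I_1,\dots,I_k),\mathbf J)=\big(\Psi_{P_1}(I_1,\psi_{\mathbf P,1}(\mathbf J)),\dots,\Psi_{P_k}(I_k,\psi_{\mathbf P,k}((I_1,\dots,I_{k-1}),\mathbf J))\big)$. The product isomorphically represents $P$ if $\Psi_P\in\mathbf I\mathbf S(\{\Psi_{\mathbf P}\})$. *)

From mathcomp Require Import all_boot.
Set Implicit Arguments. Unset Strict Implicit. Unset Printing Implicit Defensive.

Definition rule (A : finType) : finType := (A * {set A} * {set A})%type.
Definition H {A : finType} (r : rule A) : A := r.1.1.
Definition Bpos {A : finType} (r : rule A) : {set A} := r.1.2.
Definition Bneg {A : finType} (r : rule A) : {set A} := r.2.

(* A program over the atom set A (all of A = Gamma_P) is a finite set of rules;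
   nonemptiness is imposed in the theorem. *)
Definition program (A : finType) := {set rule A}.

Definition positive {A : finType} (P : program A) : Prop :=
  forall r, r \in P -> Bneg r = set0.

Definition tight {A : finType} (P : program A) : Prop :=
  exists l : A -> nat, forall r, r \in P -> forall b, b \in Bpos r -> l b < l (H r).

Definition Psi {A : finType} (P : program A) (I J : {set A}) : {set A} :=
  [set H r | r in [set r in P | (Bpos r \subset I) && [disjoint Bneg r & J]]].

Record automaton := Automaton {
  st : finType;
  inp : finType;
  delta : st -> inp -> st }.

Definition char_aut {A : finType} (P : program A) : automaton :=
  @Automaton {set A} {set A} (Psi P).

Definition subautomaton (M : automaton) (Q' : {set st M}) (S' : {set inp M}) : Prop :=
  S' != set0 /\ forall q x, q \in Q' -> x \in S' -> delta q x \in Q'.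

Definition iso_onto (N M : automaton) (Q' : {set st M}) (S' : {set inp M}) : Prop :=
  exists (h1 : st N -> st M) (h2 : inp N -> inp M),
    [/\ injective h1, h1 @: setT = Q', injective h2, h2 @: setT = S' &
        forall q x, h1 (delta q x) = delta (h1 q) (h2 x)].

Arguments iso_onto N {M} Q' S'.

Definition in_IS (N M : automaton) : Prop :=
  exists (Q' : {set st M}) (S' : {set inp M}), subautomaton Q' S' /\ iso_onto N Q' S'.

(* R over the single atom tt : the rule  tt <- not tt *)
Definition reset_prog : program unit := [set ((tt, set0, [set tt]) : rule unit)].

Definition feedforward {A : finType} (k : nat) (T : finType)
  (psi : 'I_k -> {ffun 'I_k -> {set A}} -> T -> {set A}) : Prop :=
  forall (i : 'I_k) (s s' : {ffun 'I_k -> {set A}}) (x : T),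
    (forall j : 'I_k, j < i -> s j = s' j) -> psi i s x = psi i s' x.

(* characteristic automaton of P |x ... |x P [T, psi]  (k factors, all equal to P) *)
Definition cascade_aut {A : finType} (P : program A) (k : nat) (T : finType)
  (psi : 'I_k -> {ffun 'I_k -> {set A}} -> T -> {set A}) : automaton :=
  @Automaton {ffun 'I_k -> {set A}} T
    (fun s x => [ffun i => Psi P (s i) (psi i s x)]).

From mathcomp Require Import all_boot.

Set Implicit Arguments.
Unset Strict Implicit.
Unset Printing Implicit Defensive.

(* Number the atoms injectively by positions 0, ..., k-1 so that
   a tight level map [l] increases strictly along the order: body atoms of a
   rule come before its head.  A set of atoms [I] is encoded by letting the
   reset component of each atom [a] hold [{tt}] iff [a \in I].  A reset
   component becomes [{tt}] exactly when its input is empty, so the input of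
   component [i] is chosen empty iff some rule with head at position [i] has
   its whole (lower-positioned, hence already visible) body true.  A positive
   program ignores its input [J], so this is exactly one step of [Psi P]: the
   encoding is an injective simulation of [Psi P] inside the cascade. *)

Lemma exists_strict_mono_embedding (A : finType) (l : A -> nat) :
  exists k (e : A -> 'I_k),
    injective e /\ forall a b, l b < l a -> e b < e a.
Proof.
pose rank a := l a * #|A| + enum_rank a.
have rank_lt a : rank a < (\max_(b : A) l b).+1 * #|A|.
  by rewrite mulSnr -addnS leq_add ?ltn_ord // leq_mul2r leq_bigmax orbT.
exists _, (fun a => Ordinal (rank_lt a)); split.
  move=> a b /(congr1 (modn^~ #|A| \o val)) /=.
  rewrite !modnMDl !modn_small ?ltn_ord // => /val_inj.
  exact: enum_rank_inj.
move=> a b lt_ba /=; rewrite /rank.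
apply: (@leq_trans ((l b).+1 * #|A|)); first by rewrite mulSnr ltn_add2l.
by rewrite (leq_trans _ (leq_addr _ _)) // leq_mul2r lt_ba orbT.
Qed.

Lemma mem_Psi_positive (A : finType) (P : program A) (I J : {set A}) a :
  positive P ->
  (a \in Psi P I J) = [exists r in P, (H r == a) && (Bpos r \subset I)].
Proof.
move=> posP; apply/imsetP/existsP => [[r] | [r /and3P[rP /eqP <- subI]]].
  by rewrite inE => /and3P[rP subI _] ->; exists r; rewrite rP eqxx.
exists r => //; rewrite inE rP subI (posP r rP).
by apply/eq_disjoint0 => b; rewrite inE.
Qed.

Lemma mem_Psi_reset (S J : {set unit}) : (tt \in Psi reset_prog S J) = (tt \notin J).
Proof.
apply/imsetP/idP => [[r] | ttNJ].
  by rewrite !inE => /andP[/eqP -> /andP[_]]; rewrite /Bneg /= disjoints1.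
exists (tt, set0, [set tt]) => //.
by rewrite !inE eqxx /Bpos /Bneg /= sub0set disjoints1.
Qed.

Lemma in_IS_inj_simulation (N M : automaton)
    (h1 : st N -> st M) (h2 : inp N -> inp M) :
  0 < #|inp N| -> injective h1 -> injective h2 ->
  (forall q x, h1 (delta q x) = delta (h1 q) (h2 x)) -> in_IS N M.
Proof.
move=> /card_gt0P[x0 _] h1_inj h2_inj h12.
exists (h1 @: setT), (h2 @: setT); split; last by exists h1, h2.
split; first by apply/set0Pn; exists (h2 x0); rewrite imset_f.
by move=> _ _ /imsetP[q _ ->] /imsetP[x _ ->]; rewrite -h12 imset_f.
Qed.

Section ResetCascade.

Variables (A : finType) (k : nat) (e : A -> 'I_k).
Hypothesis e_inj : injective e.

Definition reset_encode (I : {set A}) : {ffun 'I_k -> {set unit}} :=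
  [ffun i => [set _ : unit | i \in e @: I]].

Definition reset_decode_below (i : 'I_k) (s : {ffun 'I_k -> {set unit}}) : {set A} :=
  [set b | (e b < i) && (tt \in s (e b))].

Definition reset_input (P : program A) (i : 'I_k) (s : {ffun 'I_k -> {set unit}})
    (_ : {set A}) : {set unit} :=
  [set _ : unit | ~~ [exists r in P,
                       (e (H r) == i) && (Bpos r \subset reset_decode_below i s)]].

Lemma reset_input_feedforward (P : program A) : feedforward (reset_input P).
Proof.
move=> i s s' x eq_s; rewrite /reset_input.
suff -> : reset_decode_below i s = reset_decode_below i s' by [].
by apply/setP => b; rewrite !inE; case: ltnP => //= /eq_s ->.
Qed.

Lemma reset_encode_inj : injective reset_encode.
Proof.
move=> I J /ffunP eqIJ; apply: (imset_inj e_inj); apply/setP => i.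
by have /setP/(_ tt) := eqIJ i; rewrite !ffunE !inE.
Qed.

Lemma reset_decode_below_encode i I :
  reset_decode_below i (reset_encode I) = [set b in I | e b < i].
Proof. by apply/setP => b; rewrite !inE ffunE inE (mem_imset _ _ e_inj) andbC. Qed.

Lemma reset_encode_Psi (P : program A) :
    positive P -> (forall r b, r \in P -> b \in Bpos r -> e b < e (H r)) ->
  forall I x, reset_encode (Psi P I x) =
    @delta (cascade_aut reset_prog (reset_input P)) (reset_encode I) x.
Proof.
move=> posP e_mono I x; apply/ffunP => i; apply/setP => -[].
rewrite !ffunE mem_Psi_reset !inE negbK reset_decode_below_encode.
apply/imsetP/existsP => [[a] | [r /and3P[rP /eqP <- subI]]].
  rewrite mem_Psi_positive // => /exists_inP[r rP /andP[/eqP <- subI]] ->.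
  exists r; rewrite rP eqxx; apply/subsetP => b bB.
  by rewrite inE (subsetP subI) ?e_mono.
exists (H r) => //; rewrite mem_Psi_positive //; apply/exists_inP; exists r => //.
rewrite eqxx (subset_trans subI) //.
by apply/subsetP => b; rewrite inE => /andP[].
Qed.

End ResetCascade.

Theorem theorem5p3 (A : finType) (P : program A) :
  0 < #|A| -> P != set0 -> positive P -> tight P ->
  exists (k : nat) (T : finType)
         (psi : 'I_k -> {ffun 'I_k -> {set unit}} -> T -> {set unit}),
    [/\ 0 < k, 0 < #|T|, feedforward psi &
        in_IS (char_aut P) (cascade_aut reset_prog psi)].
Proof.
move=> /card_gt0P[a0 _] _ posP [l l_tight].
have [k [e [e_inj e_mono]]] := exists_strict_mono_embedding l.
have card_sets : 0 < #|{set A}| by apply/card_gt0P; exists set0.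
exists k, {set A}, (reset_input e P); split.
- exact: leq_ltn_trans (leq0n _) (ltn_ord (e a0)).
- exact: card_sets.
- exact: reset_input_feedforward.
apply: (@in_IS_inj_simulation (char_aut P) (cascade_aut reset_prog (reset_input e P))
                              (reset_encode e) id card_sets) => //.
- exact: reset_encode_inj.
- apply: reset_encode_Psi => // r b rP /(l_tight r rP); exact: e_mono.
Qed.
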